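(* For every finite field $\mathbb{F}_q$, the eigenvalues of the adjacency matrix of the unit-graph on $\operatorname{Mat}_2(\mathbb{F}_q)$ are exactly: $q^4-q^3-q^2+q$ with multiplicity $1$, $q$ with multiplicity $q^4-q^3-q^2+q$, and $q-q^2$ with multiplicity $q^3+q^2-q-1$.
   Context: The unit-graph on $\operatorname{Mat}_2(\mathbb{F}_q)$ is the graph with vertex set $\operatorname{Mat}_2(\mathbb{F}_q)$ in which $A$ and $B$ are adjacent iff $B - A \in \operatorname{GL}_2(\mathbb{F}_q)$. *)

From HB Require Import structures.
From mathcomp Require Import all_boot all_order all_algebra all_field.
Set Implicit Arguments. Unset Strict Implicit. Unset Printing Implicit Defensive.
Import GRing.Theory Num.Theory.
Local Open Scope ring_scope.

Definition vtx (F : finFieldType) (i : 'I_#|{: 'M[F]_2}|) : 'M[F]_2 := enum_val i.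

Definition unit_adj (F : finFieldType) : 'M[algC]_#|{: 'M[F]_2}| :=
  \matrix_(i, j) ((vtx j - vtx i \in unitmx) : nat)%:R.

From HB Require Import structures.
From mathcomp Require Import all_boot all_order all_algebra all_field.
From mathcomp Require Import ring zify.
Set Implicit Arguments. Unset Strict Implicit. Unset Printing Implicit Defensive.
Import GRing.Theory Num.Theory.
Local Open Scope ring_scope.

(* The unit-graph is the Cayley graph of (Mat_2(F_q), +) with connection set
   GL_2(F_q), so the number of common neighbours of A and B is the number of
   invertible Y with (B - A) - Y invertible.  Multiplying by invertible matrices
   shows that this number depends only on the rank of B - A, and
   inclusion-exclusion reduces it to counting pairs of singular matrices, a
   computation in coordinates.  Hence the graph is strongly regular with
   parameters (q^4, k, l, m) = (q^4, q^4-q^3-q^2+q, q^4-2q^3-q^2+3q, q^4-2q^3+q),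
   and its adjacency matrix is annihilated by (X - k)(X - q)(X - (q - q^2)).
   A Schur triangularisation then writes the characteristic polynomial as a
   product of these three factors, and the multiplicities are the unique
   solution of the Vandermonde system given by the traces of 1, A and A^2. *)

Lemma big_three_valued (R : Type) (idx : R) (op : Monoid.com_law idx)
    (I : finType) (T : eqType) (t : I -> T) (d e r : T) (G : T -> R) :
  d != e -> d != r -> e != r -> (forall i, [\/ t i = d, t i = e | t i = r]) ->
  \big[op/idx]_i G (t i) =
    op (op (\big[op/idx]_(i | t i == d) G d) (\big[op/idx]_(i | t i == e) G e))
       (\big[op/idx]_(i | t i == r) G r).
Proof.
move=> de dr er t3; rewrite !(big_mkcond (fun i => t i == _)) -!big_split /=.
apply: eq_bigr => i _.
have [ed rd re] : [/\ e != d, r != d & r != e] by split; rewrite eq_sym.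
case: (t3 i) => ->;
  rewrite eqxx ?(negPf de, negPf dr, negPf er, negPf ed, negPf rd, negPf re).
all: by rewrite ?Monoid.mulm1 ?Monoid.mul1m.
Qed.

Lemma sum_nat_of_bool (T : finType) (P : pred T) : (\sum_x (P x : nat))%N = #|P|.
Proof. by rewrite -sum1_card [RHS]big_mkcond. Qed.

Lemma card_preim_inj (T : finType) (f : T -> T) (B : {pred T}) :
  injective f -> #|[preim f of B]| = #|B|.
Proof.
by move=> f_inj; rewrite card_preim //; apply: eq_card => y; rewrite inE injF_onto.
Qed.

Lemma card_inclusion_exclusion (T : finType) (p s : pred T) :
  (#|[pred x | p x && s x]| + #|[pred x | ~~ p x]| + #|[pred x | ~~ s x]|
   = #|T| + #|[pred x | ~~ p x && ~~ s x]|)%N.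
Proof.
rewrite -!sum_nat_of_bool -!big_split /=; apply: eq_bigr => x _.
by case: (p x); case: (s x).
Qed.

Lemma mxtrace_conjmx (F : fieldType) n (V A : 'M[F]_n) :
  V \in unitmx -> \tr (conjmx V A) = \tr A.
Proof. by move=> Vu; rewrite conjumx // mxtrace_mulC mulmxA mulVmx ?mul1mx. Qed.

Lemma char_poly_conjmx (F : fieldType) n (V A : 'M[F]_n) :
  V \in unitmx -> char_poly (conjmx V A) = char_poly A.
Proof.
move=> Vu; rewrite conjumx // /char_poly /char_poly_mx !map_mxM map_invmx.
set V' := map_mx _ V; have V'u : V' \in unitmx by rewrite map_unitmx.
have eX : ('X%:M : 'M_n) = V' *m 'X%:M *m invmx V'.
  by rewrite scalar_mxC -mulmxA mulmxV // mulmx1.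
by rewrite {1}eX -mulmxBl -mulmxBr !det_mulmx det_inv mulrC mulrA mulVr ?mul1r.
Qed.

Lemma trig_mulmx_diag (R : comNzRingType) n (A B : 'M[R]_n) i :
  is_trig_mx A -> is_trig_mx B -> (A *m B) i i = A i i * B i i.
Proof.
move=> /is_trig_mxP At /is_trig_mxP Bt; rewrite mxE (bigD1 i) //= big1 ?addr0 //.
move=> k /negPf nki; case: (ltngtP i k) => [ik|ki|/val_inj ik].
- by rewrite At // mul0r.
- by rewrite Bt // mulr0.
- by rewrite ik eqxx in nki.
Qed.

Lemma eigenvalue_cubic_annihilator (F : fieldType) n (B : 'M[F]_n) (d e r a : F) :
  (B - d%:M) *m (B - e%:M) *m (B - r%:M) = 0 -> eigenvalue B a ->
  [\/ a = d, a = e | a = r].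
Proof.
move=> pB /eigenvalueP [v vB v0].
have vS s : v *m (B - s%:M) = (a - s) *: v.
  by rewrite mulmxBr vB mul_mx_scalar scalerBl.
have : v *m ((B - d%:M) *m (B - e%:M) *m (B - r%:M)) =
    ((a - d) * (a - e) * (a - r)) *: v.
  rewrite !mulmxA (vS d) -scalemxAl (vS e) -!scalemxAl (vS r) !scalerA.
  by congr (_ *: _); ring.
rewrite pB mulmx0 => /esym/eqP.
rewrite scaler_eq0 (negPf v0) orbF !mulf_eq0 !subr_eq0.
by case/orP => [/orP[]|] /eqP; [constructor 1|constructor 2|constructor 3].
Qed.

Lemma char_poly_cubic_annihilator (C : numClosedFieldType) n (B : 'M[C]_n)
    (d e r : C) :
  d != e -> d != r -> e != r ->
  (B - d%:M) *m (B - e%:M) *m (B - r%:M) = 0 ->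
  exists a b c : nat,
    [/\ char_poly B = ('X - d%:P) ^+ a * ('X - e%:P) ^+ b * ('X - r%:P) ^+ c,
        (a + b + c)%N = n,
        a%:R * d + b%:R * e + c%:R * r = \tr B &
        a%:R * d ^+ 2 + b%:R * e ^+ 2 + c%:R * r ^+ 2 = \tr (B *m B)].
Proof.
move=> de dr er pB; case: n B pB => [|n] B pB.
  exists 0%N, 0%N, 0%N.
  by rewrite /char_poly det_mx00 /mxtrace !big_ord0 !expr0 !mul1r !mul0r !addr0.
have [P Pu Tt] := Schur B isT; have Punit := unitarymx_unit Pu.
set T := conjmx P B in Tt.
have TT : T *m T = conjmx P (B *m B) by rewrite conjmxM ?inE ?stablemx_unit.
have diagT i : [\/ T i i = d, T i i = e | T i i = r].
  apply: eigenvalue_cubic_annihilator pB _.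
  rewrite eigenvalue_root_char -(char_poly_conjmx B Punit) char_poly_trig //.
  by rewrite (bigD1 i) //= rootM root_XsubC eqxx.
have part := big_three_valued _ _ de dr er diagT.
exists #|[pred i | T i i == d]|, #|[pred i | T i i == e]|, #|[pred i | T i i == r]|.
split.
- rewrite -(char_poly_conjmx B Punit) char_poly_trig //.
  by rewrite (part _ _ _ (fun v => 'X - v%:P)) !prodr_const.
- have := part _ 0 +%R (fun _ => 1 : C); rewrite /= !sumr_const card_ord -!natrD.
  by move/eqP; rewrite eqr_nat => /eqP.
- rewrite -(mxtrace_conjmx B Punit) /mxtrace (part _ _ _ id) /= !sumr_const.
  by rewrite !mulr_natl.
- rewrite -(mxtrace_conjmx (B *m B) Punit) -TT /mxtrace.
  under eq_bigr do rewrite trig_mulmx_diag // -expr2.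
  by rewrite (part _ _ _ (fun v => v ^+ 2)) /= !sumr_const !mulr_natl.
Qed.

Lemma vandermonde3_inj (R : idomainType) (d e r a b c a' b' c' : R) :
  d != e -> d != r -> e != r ->
  a + b + c = a' + b' + c' ->
  a * d + b * e + c * r = a' * d + b' * e + c' * r ->
  a * d ^+ 2 + b * e ^+ 2 + c * r ^+ 2 = a' * d ^+ 2 + b' * e ^+ 2 + c' * r ^+ 2 ->
  [/\ a = a', b = b' & c = c'].
Proof.
move=> de dr er E0 E1 E2.
pose S (f : R -> R) :=
  a * f d + b * f e + c * f r - (a' * f d + b' * f e + c' * f r).
have S0 : S (fun=> 1) = 0 by rewrite /S !mulr1 E0 subrr.
have S1 : S id = 0 by rewrite /S E1 subrr.
have S2 : S (fun x => x ^+ 2) = 0 by rewrite /S E2 subrr.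
have lagrange (x s t u : R) : s != t -> s != u ->
    x * ((s - t) * (s - u)) =
      S (fun x => x ^+ 2) - (t + u) * S id + t * u * S (fun=> 1) ->
    x = 0.
  move=> /negPf st /negPf su; rewrite S0 S1 S2 !mulr0 subr0 addr0 => /eqP.
  by rewrite !mulf_eq0 !subr_eq0 st su !orbF => /eqP.
have ed : e != d by rewrite eq_sym.
have [rd re] : r != d /\ r != e by rewrite !(eq_sym r).
split; apply/eqP; rewrite -subr_eq0; apply/eqP.
- by apply: (lagrange _ d e r) => //; rewrite /S; ring.
- by apply: (lagrange _ e d r) => //; rewrite /S; ring.
- by apply: (lagrange _ r d e) => //; rewrite /S; ring.
Qed.

Lemma srg_cubic_annihilator (R : comNzRingType) n (A : 'M[R]_n) (k l m e r : R) :
  A *m A = k%:M + l *: A + m *: (const_mx 1 - 1%:M - A) ->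
  A *m const_mx 1 = k *: (const_mx 1 : 'M_n) ->
  e + r = l - m -> e * r = m - k ->
  (A - k%:M) *m (A - e%:M) *m (A - r%:M) = 0.
Proof.
move=> + + er_sum er_prod.
have -> : l = e + r + m by rewrite er_sum subrK.
have -> : k = m - e * r by rewrite er_prod opprB addrC subrK.
move=> AA AJ.
have Aer : (A - e%:M) *m (A - r%:M) = m *: const_mx 1.
  rewrite mulmxBl !mulmxBr AA !mul_scalar_mx !mul_mx_scalar.
  by apply/matrixP => i j; rewrite !mxE; ring.
by rewrite -mulmxA Aer -scalemxAr mulmxBl AJ mul_scalar_mx subrr scaler0.
Qed.

Lemma char_poly_srg (C : numClosedFieldType) n (A : 'M[C]_n) (k l m e r : C) :
  A *m A = k%:M + l *: A + m *: (const_mx 1 - 1%:M - A) ->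
  A *m const_mx 1 = k *: (const_mx 1 : 'M_n) -> \tr A = 0 ->
  e + r = l - m -> e * r = m - k -> k != e -> k != r -> e != r ->
  exists a b c : nat,
    [/\ char_poly A = ('X - k%:P) ^+ a * ('X - e%:P) ^+ b * ('X - r%:P) ^+ c,
        (a + b + c)%N = n,
        a%:R * k + b%:R * e + c%:R * r = 0 &
        a%:R * k ^+ 2 + b%:R * e ^+ 2 + c%:R * r ^+ 2 = n%:R * k].
Proof.
move=> AA AJ trA er_sum er_prod ke kr er.
have [a [b [c [cpA abc tr1 tr2]]]] := char_poly_cubic_annihilator ke kr er
  (srg_cubic_annihilator AA AJ er_sum er_prod).
have trJ : \tr (const_mx 1 : 'M[C]_n) = n%:R.
  rewrite /mxtrace (eq_bigr (fun=> 1)) => [|i _]; last by rewrite mxE.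
  by rewrite sumr_const card_ord.
exists a, b, c; split => //; first by rewrite tr1.
rewrite tr2 AA !(raddfD, raddfN, mxtraceZ) /= !mxtraceZ.
rewrite mxtrace_scalar mxtrace1 trJ trA.
by rewrite subrr !mulr0 subr0 !addr0 mulr_natl.
Qed.

Lemma unitmxN (R : comUnitRingType) n (A : 'M[R]_n) :
  (- A \in unitmx) = (A \in unitmx).
Proof. by rewrite -scaleN1r unitmxZ ?unitrN1. Qed.

Lemma det_mx22 (R : comNzRingType) (A : 'M[R]_2) :
  \det A = A 0 0 * A 1 1 - A 0 1 * A 1 0.
Proof.
rewrite (expand_det_row _ 0) !big_ord_recl big_ord0 /cofactor !det_mx11 /=.
rewrite !mxE /= expr0 expr1 mul1r mulN1r addr0 mulrN.
have -> : lift (0 : 'I_2) 0 = 1 by apply/val_inj.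
by have -> : lift (1 : 'I_2) 0 = 0 by apply/val_inj.
Qed.

Lemma ord2P (i : 'I_2) : i = 0 \/ i = 1.
Proof. by case: i => [[|[|//]] Hi]; [left|right]; apply/val_inj. Qed.

Section UnitGraph.
Variable F : finFieldType.
Local Notation q := #|F|.
Implicit Types (D Y : 'M[F]_2) (a k : F).

Lemma count_mul_eq k :
  (\sum_(b : F) \sum_(c : F) (((b * c)%R == k) : nat))%N = (q.-1 + (k == 0%R) * q)%N.
Proof.
rewrite (bigD1 0%R) //= addnC; congr (_ + _)%N.
  rewrite -(cardC1 (0 : F)) -sum1_card; apply: eq_bigr => b b0.
  rewrite (bigD1 (b^-1 * k)) //= mulVKf // eqxx big1 // => c cne.
  case: eqP => // bck.
  by rewrite -bck mulKf // eqxx in cne.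
rewrite (eq_bigr (fun=> (k == 0 : nat))) => [|c _]; last by rewrite mul0r eq_sym.
by rewrite sum_nat_const mulnC.
Qed.

Definition mx22 (a b c d : F) : 'M[F]_2 :=
  \matrix_(i, j) if i == 0 then if j == 0 then a else b else if j == 0 then c else d.

Lemma sum_mx22 (G : 'M[F]_2 -> nat) :
  (\sum_Y G Y = \sum_a \sum_b \sum_c \sum_d G (mx22 a b c d))%N.
Proof.
pose mx22p (p : F * (F * (F * F))) := mx22 p.1 p.2.1 p.2.2.1 p.2.2.2.
rewrite (reindex mx22p); last first.
  exists (fun Y => (Y 0 0, (Y 0 1, (Y 1 0, Y 1 1)))) => [[a [b [c d]]] _|Y _].
    by rewrite /mx22p /mx22 !mxE.
  apply/matrixP => i j; rewrite mxE.
  by case: (ord2P i) => ->; case: (ord2P j) => ->.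
symmetry; under eq_bigr do under eq_bigr do rewrite pair_big.
under eq_bigr do rewrite pair_big.
by rewrite pair_big; apply: eq_big => [[a [b [c d]]]|[a [b [c d]]] _].
Qed.

Lemma singular_pair_diag (D Y : 'M[F]_2) (t : F) :
  D 0 0 = 1 -> D 0 1 = 0 -> D 1 0 = 0 -> D 1 1 = t ->
  (Y \notin unitmx) && (D - Y \notin unitmx) =
  (Y 1 1 == t * (1 - Y 0 0)) && (Y 0 1 * Y 1 0 == Y 0 0 * (t * (1 - Y 0 0))).
Proof.
move=> D00 D01 D10 D11.
rewrite !unitmxE !unitfE !negbK !det_mx22 !mxE D00 D01 D10 D11.
set a := Y 0 0; set b := Y 0 1; set c := Y 1 0; set d := Y 1 1.
have -> : (1 - a) * (t - d) - (0 - b) * (0 - c) = a * d - b * c + (t * (1 - a) - d).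
  by ring.
apply/andP/andP => [[/eqP detY]|[/eqP -> /eqP bc]].
  rewrite detY add0r subr_eq0 => /eqP dE; split; first by rewrite dE.
  by move/eqP: detY; rewrite -dE subr_eq0 eq_sym.
by rewrite bc subrr add0r subrr eqxx.
Qed.

Lemma card_singular_pairs_diag (D : 'M[F]_2) (t : F) :
  D 0 0 = 1 -> D 0 1 = 0 -> D 1 0 = 0 -> D 1 1 = t ->
  #|[pred Y : 'M[F]_2 | (Y \notin unitmx) && (D - Y \notin unitmx)]| =
    (\sum_a (q.-1 + ((a * (t * (1 - a)))%R == 0%R) * q))%N.
Proof.
move=> D00 D01 D10 D11; rewrite -sum_nat_of_bool sum_mx22; apply: eq_bigr => a _.
rewrite -count_mul_eq; apply: eq_bigr => b _; apply: eq_bigr => c _.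
rewrite (bigD1 (t * (1 - a))) //= (singular_pair_diag _ D00 D01 D10 D11).
rewrite !mxE /= eqxx /=.
rewrite big1 ?addn0 // => d.
by rewrite (singular_pair_diag _ D00 D01 D10 D11) !mxE /= => /negPf ->.
Qed.

Definition common_units (D : 'M[F]_2) :=
  #|[pred Y : 'M[F]_2 | (Y \in unitmx) && (D - Y \in unitmx)]|.

Lemma card_unitmx2 : #|(unitmx : pred 'M[F]_2)| = (q * q.-1 ^ 2 * q.+1)%N.
Proof. by rewrite -card_GL_2 cardsT /= card_sub. Qed.

Lemma common_units0 : common_units 0 = #|(unitmx : pred 'M[F]_2)|.
Proof. by apply: eq_card => Y; rewrite inE sub0r unitmxN andbb. Qed.

Lemma common_units_inclusion_exclusion D :
  (common_units D + 2 * #|[pred Y : 'M[F]_2 | Y \notin unitmx]| =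
   q ^ 4 + #|[pred Y : 'M[F]_2 | (Y \notin unitmx) && ((D - Y)%R \notin unitmx)]|)%N.
Proof.
have sub_inj : injective (fun Y : 'M[F]_2 => D - Y) by apply: can_inj (subKr D).
have -> : (q ^ 4 = #|{: 'M[F]_2}|)%N by rewrite card_mx.
rewrite -(card_inclusion_exclusion (mem unitmx) (fun Y => D - Y \in unitmx)).
have -> : #|[pred Y | (D - Y)%R \notin unitmx]| =
          #|[pred Y : 'M[F]_2 | Y \notin unitmx]|.
  exact: (card_preim_inj [pred Y | Y \notin unitmx] sub_inj).
by rewrite mul2n -addnn addnA.
Qed.

Lemma common_units_equiv (P D Q : 'M[F]_2) :
  P \in unitmx -> Q \in unitmx -> common_units (P *m D *m Q) = common_units D.
Proof.
move=> Pu Qu; have PQ_inj : injective (fun Y : 'M[F]_2 => P *m Y *m Q).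
  apply: (can_inj (g := fun Y => invmx P *m Y *m invmx Q)) => Y.
  by rewrite !mulmxA mulmxK // mulVmx // mul1mx.
rewrite /common_units -(card_preim_inj _ PQ_inj); apply: eq_card => Y.
by rewrite !inE /= -mulmxBl -mulmxBr !unitmx_mul Pu Qu /= !andbT.
Qed.

Lemma common_units_rank D : common_units D = common_units (pid_mx (\rank D)).
Proof.
by rewrite -{1}(mulmx_ebase D) common_units_equiv ?col_ebase_unit ?row_ebase_unit.
Qed.

Lemma card_singular_pairs1 :
  #|[pred Y : 'M[F]_2 | (Y \notin unitmx) && (1 - Y \notin unitmx)]| =
    (q * q.-1 + 2 * q)%N.
Proof.
rewrite (@card_singular_pairs_diag 1 1) ?mxE // big_split /= sum_nat_const.
rewrite -big_distrl /= sum_nat_of_bool mulnC; congr (_ + _ * _)%N.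
have := card2 (0 : F) 1; rewrite eq_sym oner_eq0 => <-; apply: eq_card => a.
rewrite !inE -[_ \in _]/(a * (1 * (1 - a)) == 0).
by rewrite mul1r mulf_eq0 subr_eq0 (eq_sym 1).
Qed.

Lemma card_singular_pairs_pid1 :
  #|[pred Y : 'M[F]_2 | (Y \notin unitmx) && (pid_mx 1 - Y \notin unitmx)]| =
    (q * (q.-1 + q))%N.
Proof.
rewrite (@card_singular_pairs_diag _ 0) ?mxE //.
under eq_bigr do rewrite mul0r mulr0 eqxx mul1n.
by rewrite sum_nat_const.
Qed.

Local Notation x := (q%:R : algC).

Lemma natr_predn_card : q.-1%:R = x - 1.
Proof. by rewrite -subn1 natrB // ltnW // card_finNzRing_gt1. Qed.

Lemma natr_card_unitmx2 :
  #|(unitmx : pred 'M[F]_2)|%:R = x ^+ 4 - x ^+ 3 - x ^+ 2 + x.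
Proof. by rewrite card_unitmx2 !natrM natr_predn_card -natr1; ring. Qed.

Lemma natr_card_singular2 :
  #|[pred Y : 'M[F]_2 | Y \notin unitmx]|%:R = x ^+ 3 + x ^+ 2 - x.
Proof.
have /(congr1 (fun n => n%:R : algC)) := cardC (mem (unitmx : pred 'M[F]_2)).
rewrite natrD natr_card_unitmx2 card_mx natrX => /(canRL (addKr _)) singE.
by apply: etrans singE _; ring.
Qed.

Lemma natr_common_units D (s : nat) :
  #|[pred Y : 'M[F]_2 | (Y \notin unitmx) && (D - Y \notin unitmx)]| = s ->
  (common_units D)%:R = x ^+ 4 - 2 * (x ^+ 3 + x ^+ 2 - x) + s%:R.
Proof.
move=> singD.
have /(congr1 (fun n => n%:R : algC)) := common_units_inclusion_exclusion D.
rewrite singD !natrD natrX natr_card_singular2 addr0 => /(canRL (addrK _)) ->.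
by ring.
Qed.

Lemma natr_common_units1 :
  (common_units 1)%:R = x ^+ 4 - 2 * x ^+ 3 - x ^+ 2 + 3 * x.
Proof.
rewrite (natr_common_units card_singular_pairs1) natrD !natrM natr_predn_card.
by ring.
Qed.

Lemma natr_common_units_pid1 :
  (common_units (pid_mx 1))%:R = x ^+ 4 - 2 * x ^+ 3 + x.
Proof.
rewrite (natr_common_units card_singular_pairs_pid1) natrM natrD natr_predn_card.
by ring.
Qed.

Lemma sum_vtx (G : 'M[F]_2 -> nat) :
  (\sum_(k < #|{: 'M[F]_2}|) G (vtx k) = \sum_Y G Y)%N.
Proof.
rewrite (reindex (@enum_rank _)); last first.
  by exists enum_val => Y _; rewrite ?enum_rankK ?enum_valK.
by apply: eq_bigr => Y _; rewrite /vtx enum_rankK.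
Qed.

Lemma unit_adj_mulE i j :
  (unit_adj F *m unit_adj F) i j = (common_units (vtx j - vtx i))%:R.
Proof.
rewrite !mxE; under eq_bigr do rewrite !mxE -natrM mulnb.
rewrite -natr_sum.
rewrite (sum_vtx (fun Y => (Y - vtx i \in unitmx) && (vtx j - Y \in unitmx))).
rewrite sum_nat_of_bool /common_units -[in RHS](card_preim_inj _ (addIr (- vtx i))).
congr _%:R; apply: eq_card => Y; rewrite !inE /=.
by rewrite opprB addrA subrK.
Qed.

Lemma unit_adj_regular :
  unit_adj F *m const_mx 1 =
    (x ^+ 4 - x ^+ 3 - x ^+ 2 + x) *: (const_mx 1 : 'M_#|{: 'M[F]_2}|).
Proof.
apply/matrixP => i j; rewrite !mxE mulr1 -natr_card_unitmx2.
under eq_bigr do rewrite !mxE mulr1.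
rewrite -natr_sum (sum_vtx (fun Y => Y - vtx i \in unitmx)) sum_nat_of_bool.
by rewrite -[in RHS](card_preim_inj _ (addIr (- vtx i))).
Qed.

Lemma unit_adj_trace : \tr (unit_adj F) = 0.
Proof.
by rewrite /mxtrace big1 // => i _; rewrite mxE subrr unitmxE det0 unitr0.
Qed.

Lemma unit_adj_sqr :
  unit_adj F *m unit_adj F =
    (x ^+ 4 - x ^+ 3 - x ^+ 2 + x)%:M
    + (x ^+ 4 - 2 * x ^+ 3 - x ^+ 2 + 3 * x) *: unit_adj F
    + (x ^+ 4 - 2 * x ^+ 3 + x) *: (const_mx 1 - 1%:M - unit_adj F).
Proof.
rewrite -natr_card_unitmx2 -natr_common_units1 -natr_common_units_pid1.
apply/matrixP => i j; rewrite unit_adj_mulE !mxE.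
have [<-|nij] := eqVneq i j.
  rewrite subrr common_units0 unitmxE det0 unitr0 /=.
  by ring.
rewrite common_units_rank.
have D0 : vtx j - vtx i != 0 by rewrite subr_eq0 (inj_eq (@enum_val_inj _ _)) eq_sym.
have [Du|Dn] := boolP (vtx j - vtx i \in unitmx).
  by rewrite mxrank_unit // pid_mx_1 /=; ring.
have -> : \rank (vtx j - vtx i) = 1%N.
  have := rank_leq_row (vtx j - vtx i); rewrite -row_free_unit /row_free in Dn.
  by rewrite -mxrank_eq0 in D0; case: (\rank _) D0 Dn => [|[|[|]]].
by rewrite /=; ring.
Qed.

Lemma unit_adj_eigenvalues_neq :
  [/\ x ^+ 4 - x ^+ 3 - x ^+ 2 + x != x,
      x ^+ 4 - x ^+ 3 - x ^+ 2 + x != x - x ^+ 2 & x != x - x ^+ 2].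
Proof.
have q_gt1 : (1 < q)%N := card_finNzRing_gt1 F.
have x0 : x != 0 by rewrite pnatr_eq0; lia.
have x1 : x - 1 != 0 by rewrite -natr_predn_card pnatr_eq0; lia.
have x2 : x ^+ 2 - x - 1 != 0.
  by rewrite -addrA -opprD subr_eq0 natr1 -natrX eqr_nat; nia.
split; rewrite -subr_eq0.
- have -> : x ^+ 4 - x ^+ 3 - x ^+ 2 + x - x = x ^+ 2 * (x ^+ 2 - x - 1) by ring.
  by rewrite mulf_neq0 ?expf_neq0.
- have -> : x ^+ 4 - x ^+ 3 - x ^+ 2 + x - (x - x ^+ 2) = x ^+ 3 * (x - 1) by ring.
  by rewrite mulf_neq0 ?expf_neq0.
- have -> : x - (x - x ^+ 2) = x ^+ 2 by ring.
  by rewrite expf_neq0.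
Qed.
End UnitGraph.

Theorem corollary3p7 (F : finFieldType) :
  char_poly (unit_adj F) =
    ('X - ((#|F| ^ 4)%:R - (#|F| ^ 3)%:R - (#|F| ^ 2)%:R + #|F|%:R : algC)%:P)
    * ('X - (#|F|%:R : algC)%:P) ^+ (#|F| ^ 4 - #|F| ^ 3 - #|F| ^ 2 + #|F|)%N
    * ('X - (#|F|%:R - (#|F| ^ 2)%:R : algC)%:P) ^+ (#|F| ^ 3 + #|F| ^ 2 - #|F| - 1)%N.
Proof.
set q := #|F|; set x : algC := q%:R.
set k := x ^+ 4 - x ^+ 3 - x ^+ 2 + x; set r := x - x ^+ 2.
set m := x ^+ 3 + x ^+ 2 - x - 1.
have [kx kr xr] := unit_adj_eigenvalues_neq F.
have er_sum :
    x + r = (x ^+ 4 - 2 * x ^+ 3 - x ^+ 2 + 3 * x) - (x ^+ 4 - 2 * x ^+ 3 + x).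
  by rewrite /r; ring.
have er_prod : x * r = (x ^+ 4 - 2 * x ^+ 3 + x) - k by rewrite /r /k; ring.
have [a [b [c [-> abc tr1 tr2]]]] := char_poly_srg (unit_adj_sqr F)
  (unit_adj_regular F) (unit_adj_trace F) er_sum er_prod kx kr xr.
have [a1 bk cm] : [/\ a%:R = 1 :> algC, b%:R = k & c%:R = m].
  apply: vandermonde3_inj kx kr xr _ _ _.
  - by rewrite -!natrD abc card_mx natrX /k /m; ring.
  - by rewrite tr1 /k /r /m; ring.
  - by rewrite tr2 card_mx natrX /k /r /m; ring.
have q_gt1 : (1 < q)%N := card_finNzRing_gt1 F.
have -> : a = 1%N by apply/eqP; rewrite -(pnatr_eq1 algC) a1.
have -> : b = (q ^ 4 - q ^ 3 - q ^ 2 + q)%N.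
  by apply/eqP; rewrite -(eqr_nat algC) bk natrD !natrB ?natrX ?eqxx //; nia.
have -> : c = (q ^ 3 + q ^ 2 - q - 1)%N.
  by apply/eqP; rewrite -(eqr_nat algC) cm !natrB ?natrD ?natrX ?eqxx //; nia.
by rewrite expr1 !natrX.
Qed.
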